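(* Consider a tiling of the sphere by $f>12$ angle congruent pentagons in which at most three distinct angle values occur at degree $3$ vertices. Then, after relabeling the distinct angle values, the complete set $S$ of angle combinations at degree $3$ vertices and the pentagon $P$ (multiset of the five angles of a tile) form one of the following pairs: - $S=\{\alpha^3\}$: $P=\alpha^4\beta$; - $S=\{\alpha\beta^2\}$: $P=\alpha^2\beta^3$ or $\alpha^3\beta^2$, or $P=\alpha^2\beta^2\gamma$; - $S=\{\alpha\beta\gamma,\alpha^3\}$: $P=\alpha^3\beta\gamma$ or $\alpha^2\beta^2\gamma$, or $P=\alpha^2\beta\gamma\delta$; - $S=\{\alpha\beta^2,\alpha^2\gamma\}$: $P=\alpha^3\beta\gamma$, $\alpha^2\beta^2\gamma$ or $\alpha^2\beta\gamma^2$, or $P=\alpha^2\beta\gamma\delta$; - $S=\{\alpha\beta^2,\gamma^3\}$: $P=\alpha^2\beta^2\gamma$, $\alpha^2\beta\gamma^2$, $\alpha\beta^3\gamma$, $\alpha\beta^2\gamma^2$ or $\alpha\beta\gamma^3$, or $P=\alpha\beta^2\gamma\delta$ or $\alpha\beta\gamma^2\delta$. In each case, the angle values named are pairwise distinct, and in the listed pentagons the last angle letter not occurring in $S$ (namely $\beta$ in the first case, $\gamma$ in $\alpha^2\beta^2\gamma$ of the second case, and $\delta$ in the others) denotes an angle value that appears at no degree $3$ vertex; all other letters are exactly the values occurring in $S$.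
   Context: A spherical tiling by angle congruent pentagons is a graph embedded in the sphere whose faces (tiles) are all pentagons, edge-to-edge with every vertex of degree at least $3$; each corner carries a positive real angle, the angles at each vertex sum to $2\pi$, and every tile has the same multiset of five angles. Multiplicative notation is used for multisets: e.g. $\alpha\beta^2$ is a degree $3$ vertex with corner angles $\alpha,\beta,\beta$, and $\alpha^2\beta\gamma\delta$ is a pentagon with angles $\alpha,\alpha,\beta,\gamma,\delta$. $f$ is the number of tiles. *)

From Stdlib Require Import Reals List Permutation.
From HB Require Import structures.
From mathcomp Require Import all_boot all_fingroup.
Set Implicit Arguments. Unset Strict Implicit. Unset Printing Implicit Defensive.

(* A spherical tiling is encoded as a (connected, oriented) combinatorial map
   on a finite set D of darts:
   - s : rotation of darts around their vertex; vertices = orbits of s;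
   - a : the edge involution (fixed-point free); edges = orbits of a;
   - face_perm s a = (x |-> s (a x)); tiles (faces) = orbits of face_perm.
   Each dart x corresponds bijectively to a corner: the corner of the tile
   (face orbit of x) at the vertex (s-orbit of x).  ang x is the angle there. *)

Definition face_perm (D : finType) (s a : {perm D}) : {perm D} := (a * s)%g.

Definition vertices (D : finType) (s a : {perm D}) : {set {set D}} := porbits s.
Definition edges (D : finType) (s a : {perm D}) : {set {set D}} := porbits a.
Definition tiles (D : finType) (s a : {perm D}) : {set {set D}} :=
  porbits (face_perm s a).

Definition ntiles (D : finType) (s a : {perm D}) : nat := #|tiles s a|.

Definition angles (D : finType) (ang : D -> R) (X : {set D}) : list R :=
  map ang (enum X).

Definition deg3 (D : finType) (s a : {perm D}) (V : {set D}) : bool :=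
  (V \in vertices s a) && (#|V| == 3).

Definition tile_angles (D : finType) (s a : {perm D}) (ang : D -> R)
  (P : list R) : Prop :=
  forall F, F \in tiles s a -> Permutation P (angles ang F).

Definition deg3_vertex_types (D : finType) (s a : {perm D}) (ang : D -> R)
  (S : list (list R)) : Prop :=
  (forall V, deg3 s a V -> exists c, List.In c S /\ Permutation c (angles ang V)) /\
  (forall c, List.In c S -> exists V, deg3 s a V /\ Permutation c (angles ang V)).

Record angle_congruent_pentagonal_tiling (D : finType) (s a : {perm D})
    (ang : D -> R) : Prop := {
  edge_involutive : forall x, a (a x) = x;
  edge_no_fixpoint : forall x, a x != x;
  map_connected : forall x y, connect (fun u v => (v == s u) || (v == a u)) x y;
  (* Euler characteristic 2: with connectedness, the surface is the sphere *)
  euler_sphere : #|vertices s a| + #|tiles s a| = #|edges s a| + 2;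
  vertex_degree : forall V, V \in vertices s a -> 3 <= #|V|;
  tiles_pentagons : forall F, F \in tiles s a -> #|F| = 5;
  (* each tile is a (simple) pentagon: its 5 corners are at 5 distinct vertices *)
  tiles_simple : forall F V, F \in tiles s a -> V \in vertices s a ->
                   #|F :&: V| <= 1;
  angle_pos : forall x, Rlt R0 (ang x);
  vertex_angle_sum : forall V, V \in vertices s a ->
                   \big[Rplus/R0]_(x in V) ang x = Rmult 2 PI;
  angle_congruent : exists P : list R, tile_angles s a ang P
}.

(* Euler's formula together with
   2e = 5f gives v3 >= f + 8 for the number v3 of degree 3 vertices
   ([deg3_count_lower_bound]).  Hence if a weight w on angle values gives
   every degree 3 vertex weight at least K > 0, then
   K (f + 8) <= K v3 <= (sum of w over all corners) = f w(P),
   so the pentagon P has weight w(P) > K ([weight_bound]).  Taking for w the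
   indicator of one or several values bounds their multiplicities in P. *)
From Stdlib Require Import Reals List Permutation.
From HB Require Import structures.
From mathcomp Require Import all_boot all_fingroup.
From Stdlib Require Import Lra Classical.
From mathcomp Require Import zify.
Set Implicit Arguments. Unset Strict Implicit.
Delimit Scope R_scope with Re.

Lemma sum_porbits (T : finType) (s : {perm T}) (g : T -> nat) :
  \sum_(x : T) g x = \sum_(A in porbits s) \sum_(x in A) g x.
Proof.
rewrite (partition_big (porbit s) (mem (porbits s))) => [|x _]; last exact: imset_f.
apply: eq_bigr => _ /imsetP[y _ ->]; apply: eq_bigl => x /=.
by rewrite eq_porbit_mem.
Qed.

Lemma card_porbits_sum (T : finType) (s : {perm T}) :
  #|T| = \sum_(A in porbits s) #|A|.
Proof.
rewrite -sum1_card (sum_porbits s (fun _ => 1)).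
by apply: eq_bigr => A _; rewrite sum1_card.
Qed.

Lemma porbit_involution (T : finType) (a : {perm T}) (x : T) :
  (forall y, a (a y) = y) -> porbit a x = [set x; a x].
Proof.
move=> aK; apply/setP => y; rewrite !inE; apply/porbitP/idP.
  case=> i ->; rewrite permX.
  have [->|->] : iter i a x = x \/ iter i a x = a x.
    by elim: i => [|i [] /= ->]; [left | right | left; rewrite aK].
  1,2: by rewrite eqxx ?orbT.
by case/orP => /eqP ->; [exists 0 | exists 1]; rewrite ?expg0 ?perm1 ?expg1.
Qed.

Definition wsum (w : R -> nat) (L : list R) : nat := sumn (map w L).

Lemma wsum_cons w y L : wsum w (y :: L) = w y + wsum w L.
Proof. by []. Qed.

Lemma wsum_cat w L M : wsum w (L ++ M) = wsum w L + wsum w M.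
Proof. by rewrite /wsum map_cat sumn_cat. Qed.

Lemma wsum_perm w L M : Permutation L M -> wsum w L = wsum w M.
Proof.
elim => //= [x l l' _ IH | x y l | l l' l'' _ -> _ ->] //; rewrite !wsum_cons ?IH //.
by rewrite addnCA.
Qed.

Lemma wsum_add w1 w2 L : wsum (fun y => w1 y + w2 y) L = wsum w1 L + wsum w2 L.
Proof. by elim: L => //= y L IH; rewrite !wsum_cons IH; lia. Qed.

Lemma wsum_scale k w L : wsum (fun y => k * w y) L = k * wsum w L.
Proof. by elim: L => [|y L IH] /=; rewrite ?muln0 // !wsum_cons IH mulnDr. Qed.

Lemma wsum_le_size w L : (forall y, w y <= 1) -> wsum w L <= size L.
Proof. by move=> w1; elim: L => //= y L IH; rewrite wsum_cons; have := w1 y; lia. Qed.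

Lemma wsum_In w L y : List.In y L -> w y <= wsum w L.
Proof.
elim: L => //= z L IH [->|/IH]; rewrite wsum_cons; lia.
Qed.

Definition ind (v y : R) : nat := if Req_dec_T y v then 1 else 0.
Definition cnt (L : list R) (v : R) : nat := wsum (ind v) L.

Lemma ind_eq v : ind v v = 1.
Proof. by rewrite /ind; case: Req_dec_T. Qed.

Lemma ind_neq v y : y <> v -> ind v y = 0.
Proof. by rewrite /ind; case: Req_dec_T. Qed.

Lemma ind_le1 v y : ind v y <= 1.
Proof. by rewrite /ind; case: Req_dec_T. Qed.

Lemma cnt_In L v : List.In v L -> 1 <= cnt L v.
Proof. by move=> /(wsum_In (ind v)); rewrite ind_eq. Qed.

Lemma cnt_nseq n v y : cnt (nseq n v) y = n * ind y v.
Proof.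
elim: n => //= n IH; rewrite /cnt wsum_cons -/(cnt _ y) IH mulSn.
by case: (Req_dec_T v y) => [->|ne]; rewrite ?ind_eq // !ind_neq // => /esym.
Qed.

Lemma perm_cnt L M : (forall y, cnt L y = cnt M y) -> Permutation L M.
Proof.
have occ N y : count_occ Req_dec_T N y = cnt N y.
  by elim: N => //= z N IH; rewrite /cnt wsum_cons -/(cnt N y) -IH /ind; case: Req_dec_T.
by move=> eqLM; apply/(Permutation_count_occ Req_dec_T) => y; rewrite !occ.
Qed.

Definition others (vs L : list R) : list R :=
  List.filter (fun y => if in_dec Req_dec_T y vs then false else true) L.

Lemma In_others vs L y : List.In y (others vs L) -> List.In y L /\ ~ List.In y vs.
Proof. by case/filter_In => yL; case: in_dec. Qed.

Lemma cnt_cons z L y : cnt (z :: L) y = ind y z + cnt L y.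
Proof. by []. Qed.

Lemma cnt_others vs L y :
  cnt (others vs L) y = if in_dec Req_dec_T y vs then 0 else cnt L y.
Proof.
have ind_out z : List.In y vs -> ~ List.In z vs -> ind y z = 0.
  by move=> yvs zvs; apply: ind_neq => zy; rewrite zy in zvs.
have ind_in z : ~ List.In y vs -> List.In z vs -> ind y z = 0.
  by move=> yvs zvs; apply: ind_neq => zy; rewrite -zy in yvs.
case: in_dec => yvs; elim: L => [|z L IH] //=;
  case: (in_dec _ z vs) => zvs /=; rewrite ?cnt_cons IH //.
- by rewrite ind_out.
- by rewrite ind_in.
Qed.

Lemma cnt_cat L M y : cnt (L ++ M) y = cnt L y + cnt M y.
Proof. exact: wsum_cat. Qed.

Lemma perm_decompose vs L : NoDup vs ->
  Permutation L (flatten [seq nseq (cnt L v) v | v <- vs] ++ others vs L).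
Proof.
move=> uvs; apply: perm_cnt => y; rewrite cnt_cat cnt_others.
elim: vs uvs => [|v vs IH]; first by case: in_dec.
move/NoDup_cons_iff => [vvs /IH eqL]; rewrite [flatten _]/= cnt_cat cnt_nseq.
case: (in_dec Req_dec_T y vs) eqL => yvs eqL;
  case: (in_dec Req_dec_T y (v :: vs)) => yvvs; cbn [is_left] in eqL |- *.
- by rewrite (@ind_neq y v); [lia | move=> vy; rewrite -vy in yvs].
- by case: yvvs; right.
- by case: yvvs => [vy|//]; subst y; rewrite ind_eq; lia.
- by rewrite (@ind_neq y v); [lia | move=> vy; case: yvvs; left].
Qed.

Lemma Permutation_size (L M : list R) : Permutation L M -> size L = size M.
Proof. by elim => //= [x l l' _ -> | l l' l'' _ -> _ ->]. Qed.

Lemma NoDup_rcons (vs : list R) de : NoDup vs -> ~ List.In de vs -> NoDup (vs ++ [:: de]).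
Proof.
by move=> uvs devs; apply: (Permutation_NoDup (Permutation_cons_append _ _)); constructor.
Qed.

Ltac solve_nodup := repeat constructor; simpl; intuition congruence.

Lemma five_shape_one al P : size P = 5 -> cnt P al = 4 ->
  exists be, NoDup [:: al; be] /\ Permutation [:: al; al; al; al; be] P.
Proof.
move=> sP cP; have decP := perm_decompose P (vs := [:: al]) ltac:(solve_nodup).
move: decP (Permutation_size decP) (In_others (vs := [:: al]) (L := P)).
rewrite /= cP sP size_cat /=; case: (others _ P) => [|be [|? ?]] //=.
move=> decP _ /(_ be (or_introl erefl)) [_ albe].
exists be; split; last exact: Permutation_sym.
by solve_nodup.
Qed.

Lemma five_shape_two al be P : al <> be -> size P = 5 ->
  2 <= cnt P al -> 3 <= cnt P be -> Permutation [:: al; al; be; be; be] P.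
Proof.
move=> albe sP ca cb.
have decP := perm_decompose P (vs := [:: al; be]) ltac:(solve_nodup).
move: decP (Permutation_size decP); rewrite /= sP !size_cat !size_nseq.
case: (others _ P) => [|? ?] /= decP sz; last lia.
have ca2 : cnt P al = 2 by lia.
have cb3 : cnt P be = 3 by lia.
by rewrite ca2 cb3 in decP; apply: Permutation_sym.
Qed.

Lemma five_shape_three al be ga P : NoDup [:: al; be; ga] -> size P = 5 ->
  4 <= cnt P al + cnt P be + cnt P ga ->
  (cnt P al + cnt P be + cnt P ga = 5 /\
     Permutation (nseq (cnt P al) al ++ nseq (cnt P be) be ++ nseq (cnt P ga) ga) P) \/
  (cnt P al + cnt P be + cnt P ga = 4 /\ exists de, NoDup [:: al; be; ga; de] /\
     Permutation (nseq (cnt P al) al ++ nseq (cnt P be) be ++ nseq (cnt P ga) ga ++ [:: de]) P).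
Proof.
move=> uvs sP c4; have decP := perm_decompose P uvs.
move: decP (Permutation_size decP) (@In_others [:: al; be; ga] P).
rewrite /= sP !size_cat !size_nseq cats0 -!catA.
case: (others _ P) => [|de [|? ?]] /= decP sz inO; [left | right | lia]; split; try lia.
  by rewrite cats0 in decP; apply: Permutation_sym.
exists de; split; last exact: Permutation_sym.
have [_ deO] := inO de (or_introl erefl).
exact: (NoDup_rcons uvs deO).
Qed.

Ltac case_counts :=
  let m := fresh "m" in let n := fresh "n" in let k := fresh "k" in
  move=> m n k; case: m => [|[|[|[|m]]]]; case: n => [|[|[|[|n]]]];
  case: k => [|[|[|[|k]]]] => //=; intros; try (exfalso; lia).

(* Proves a disjunction one of whose members is the hypothesis [H], possibly
   under an [exists de, NoDup _ /\ _] whose [NoDup] part is in the context. *)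
Ltac pick_disjunct H :=
  first [ exact H
        | eexists; split; [eassumption | pick_disjunct H]
        | left; pick_disjunct H
        | right; pick_disjunct H ].

Lemma five_shape_double al be ga P : NoDup [:: al; be; ga] -> size P = 5 ->
  2 <= cnt P al -> 1 <= cnt P be -> 1 <= cnt P ga -> 4 <= cnt P al + cnt P be + cnt P ga ->
  Permutation [:: al; al; al; be; ga] P \/ Permutation [:: al; al; be; be; ga] P \/
  Permutation [:: al; al; be; ga; ga] P \/
  exists de, NoDup [:: al; be; ga; de] /\ Permutation [:: al; al; be; ga; de] P.
Proof.
move=> uvs sP ca cb cg c4; move: ca cb cg.
case: (five_shape_three uvs sP c4) => [[]|[+ [de [ude]]]];
  move: (cnt P al) (cnt P be) (cnt P ga) c4; case_counts;
  match goal with H : Permutation _ P |- _ => pick_disjunct H end.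
Qed.

Lemma five_shape_single al be ga P : NoDup [:: al; be; ga] -> size P = 5 ->
  1 <= cnt P al -> 1 <= cnt P be -> 1 <= cnt P ga -> 4 <= cnt P al + cnt P be + cnt P ga ->
  7 <= 3 * cnt P be + 2 * cnt P ga ->
  Permutation [:: al; al; be; be; ga] P \/ Permutation [:: al; al; be; ga; ga] P \/
  Permutation [:: al; be; be; be; ga] P \/ Permutation [:: al; be; be; ga; ga] P \/
  Permutation [:: al; be; ga; ga; ga] P \/
  exists de, NoDup [:: al; be; ga; de] /\
    (Permutation [:: al; be; be; ga; de] P \/ Permutation [:: al; be; ga; ga; de] P).
Proof.
move=> uvs sP ca cb cg c4 c7; move: ca cb cg c7.
case: (five_shape_three uvs sP c4) => [[]|[+ [de [ude]]]];
  move: (cnt P al) (cnt P be) (cnt P ga) c4; case_counts;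
  match goal with H : Permutation _ P |- _ => pick_disjunct H end.
Qed.

Lemma cnt3_le_size al be ga L : NoDup [:: al; be; ga] ->
  cnt L al + cnt L be + cnt L ga <= size L.
Proof.
move=> uvs; have := Permutation_size (perm_decompose L uvs).
by rewrite /= !size_cat !size_nseq; lia.
Qed.

Lemma cnt_eq_size al L y : cnt L al = size L -> List.In y L -> y = al.
Proof.
move=> cL yL; case: (Req_dec_T y al) => // yal.
have uvs : NoDup [:: al] by solve_nodup.
have yO : List.In y (others [:: al] L).
  by apply/filter_In; split => //; case: in_dec => // - [ya | []]; case: yal.
move: yO (Permutation_size (perm_decompose L uvs)); rewrite /= !size_cat size_nseq cL.
by case: (others [:: al] L) => [[]|z O _] /=; lia.
Qed.

Ltac solve_perm3 :=
  first [ apply: Permutation_refl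
        | apply: perm_swap
        | apply: perm_skip; apply: perm_swap
        | apply: Permutation_trans; [apply: perm_swap | apply: perm_skip; apply: perm_swap]
        | apply: Permutation_trans; [apply: perm_skip; apply: perm_swap | apply: perm_swap]
        | apply: Permutation_trans; [apply: perm_swap | apply: Permutation_trans;
            [apply: perm_skip; apply: perm_swap | apply: perm_swap]] ].

Lemma ex_in_cons (A : Type) (u : A) (S : list A) (Q : A -> Prop) :
  (exists2 t, List.In t S & Q t) -> exists2 t, List.In t (u :: S) & Q t.
Proof. by case=> t tS Qt; exists t => //; right. Qed.

Ltac perm_member :=
  match goal with
  | |- ex2 (fun t => List.In t (?u :: _)) _ =>
      first [ exists u; [by left | solve_perm3] | apply ex_in_cons; perm_member ]
  end.

Lemma third_value (l : list R) X Y : length l <= 3 -> X <> Y ->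
  List.In X l -> List.In Y l -> exists Z, forall t, List.In t l -> List.In t [:: X; Y; Z].
Proof.
case: l => [|p [|q [|r [|? ?]]]] /= l3 XY Xl Yl; try lia; intuition subst; try congruence;
  first [ exists p; solve [simpl; intuition] | exists q; solve [simpl; intuition]
        | exists r; solve [simpl; intuition] | exists X; solve [simpl; intuition] ].
Qed.

Lemma partners_of_distinct (sg al be ga x y z : R) :
  al <> be -> al <> ga -> be <> ga -> (al + be + ga = sg)%Re ->
  List.In x [:: al; be; ga] -> List.In y [:: al; be; ga] -> List.In z [:: al; be; ga] ->
  (x + y + z = sg)%Re ->
  exists2 t, List.In t [:: [:: al; be; ga]; [:: al; al; al]; [:: be; be; be]; [:: ga; ga; ga]]
    & Permutation t [:: x; y; z].
Proof.
move=> ab ag bg sum3 [<-|[<-|[<-|[]]]] [<-|[<-|[<-|[]]]] [<-|[<-|[<-|[]]]] sumxyz;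
  first [ perm_member | exfalso; first [apply: ab; lra | apply: ag; lra | apply: bg; lra] ].
Qed.

Lemma partners_of_double (sg X Y Z x y z : R) : X <> Y -> (X + X + Y = sg)%Re ->
  List.In x [:: X; Y; Z] -> List.In y [:: X; Y; Z] -> List.In z [:: X; Y; Z] ->
  (x + y + z = sg)%Re -> x = y \/ y = z \/ x = z ->
  exists2 t, List.In t [:: [:: X; X; Y]; [:: Y; Y; Z]; [:: Z; Z; X]; [:: Z; Z; Z]]
    & Permutation t [:: x; y; z].
Proof.
move=> XY sum3 xV yV zV sumxyz rep.
case: (Req_dec_T Z X) => [ZX|ZX]; [subst Z | case: (Req_dec_T Z Y) => [ZY|ZY]; [subst Z|]];
  move: xV yV zV sumxyz rep => [<-|[<-|[<-|[]]]] [<-|[<-|[<-|[]]]] [<-|[<-|[<-|[]]]] sumxyz rep;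
  first [ perm_member
        | exfalso; first [ apply: XY; lra | apply: ZX; lra | apply: ZY; lra
                         | intuition congruence ] ].
Qed.

Lemma Rsum_perm (L M : list R) :
  Permutation L M -> fold_right Rplus R0 L = fold_right Rplus R0 M.
Proof. by elim=> //= [x l l' _ -> | x y l | l l' l'' _ -> _ ->] //; ring. Qed.

Lemma sum_angles (D : finType) (ang : D -> R) (w : R -> nat) (X : {set D}) :
  \sum_(x in X) w (ang x) = wsum w (angles ang X).
Proof.
rewrite -big_enum /wsum /angles -map_comp.
by elim: (enum X) => [|x l IH]; rewrite ?big_nil ?big_cons ?IH.
Qed.

Lemma iter_Rplus n c : iter n (Rplus c) R0 = (INR n * c)%Re.
Proof. by elim: n => [|n IH] /=; rewrite ?IH; [ring | case: n {IH} => /= *; ring]. Qed.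

Definition pentagon_classification (D : finType) (s a : {perm D}) (ang : D -> R) : Prop :=
  exists al be ga de : R,
    (NoDup [:: al; be] /\ deg3_vertex_types s a ang [:: [:: al; al; al]] /\
       tile_angles s a ang [:: al; al; al; al; be])
    \/
    (NoDup [:: al; be] /\ deg3_vertex_types s a ang [:: [:: al; be; be]] /\
       (tile_angles s a ang [:: al; al; be; be; be] \/
        tile_angles s a ang [:: al; al; al; be; be] \/
        (NoDup [:: al; be; ga] /\ tile_angles s a ang [:: al; al; be; be; ga])))
    \/
    (NoDup [:: al; be; ga] /\
       deg3_vertex_types s a ang [:: [:: al; be; ga]; [:: al; al; al]] /\
       (tile_angles s a ang [:: al; al; al; be; ga] \/
        tile_angles s a ang [:: al; al; be; be; ga] \/
        (NoDup [:: al; be; ga; de] /\ tile_angles s a ang [:: al; al; be; ga; de])))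
    \/
    (NoDup [:: al; be; ga] /\
       deg3_vertex_types s a ang [:: [:: al; be; be]; [:: al; al; ga]] /\
       (tile_angles s a ang [:: al; al; al; be; ga] \/
        tile_angles s a ang [:: al; al; be; be; ga] \/
        tile_angles s a ang [:: al; al; be; ga; ga] \/
        (NoDup [:: al; be; ga; de] /\ tile_angles s a ang [:: al; al; be; ga; de])))
    \/
    (NoDup [:: al; be; ga] /\
       deg3_vertex_types s a ang [:: [:: al; be; be]; [:: ga; ga; ga]] /\
       (tile_angles s a ang [:: al; al; be; be; ga] \/
        tile_angles s a ang [:: al; al; be; ga; ga] \/
        tile_angles s a ang [:: al; be; be; be; ga] \/
        tile_angles s a ang [:: al; be; be; ga; ga] \/
        tile_angles s a ang [:: al; be; ga; ga; ga] \/
        (NoDup [:: al; be; ga; de] /\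
           (tile_angles s a ang [:: al; be; be; ga; de] \/
            tile_angles s a ang [:: al; be; ga; ga; de])))).

Ltac eval_weights := rewrite /wsum /= ?ind_eq ?ind_neq //; congruence.

Section Tiling.
Variables (D : finType) (s a : {perm D}) (ang : D -> R).
Hypothesis T : angle_congruent_pentagonal_tiling s a ang.

Definition deg3_count : nat := \sum_(V in vertices s a) (#|V| == 3 : nat).

Lemma card_darts_tiles : #|D| = 5 * ntiles s a.
Proof.
rewrite (card_porbits_sum (face_perm s a)) /ntiles mulnC -sum_nat_const.
by apply: eq_bigr => F /(tiles_pentagons T) ->.
Qed.

Lemma card_darts_edges : #|D| = 2 * #|edges s a|.
Proof.
rewrite (card_porbits_sum a) /edges mulnC -sum_nat_const.
apply: eq_bigr => _ /imsetP[x _ ->]; rewrite porbit_involution; last exact: edge_involutive T.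
by rewrite cards2 eq_sym (negbTE (edge_no_fixpoint T x)).
Qed.

Lemma deg3_count_lower_bound : ntiles s a + 8 <= deg3_count.
Proof.
have euler := euler_sphere T; have darts_F := card_darts_tiles.
have darts_E := card_darts_edges; have darts_V := card_porbits_sum s.
have : 4 * #|vertices s a| <= \sum_(V in vertices s a) (#|V| + (#|V| == 3 : nat)).
  rewrite mulnC -sum_nat_const; apply: leq_sum => V /(vertex_degree T) dV.
  by case: eqP => /= ?; lia.
rewrite big_split /= -darts_V -/deg3_count /ntiles in darts_F *.
rewrite darts_F in darts_E *; move: euler darts_E.
move: #|vertices s a| #|tiles s a| #|edges s a| deg3_count => nV nF nE n3; lia.
Qed.

Lemma ntiles_all_deg3 : (forall V, V \in vertices s a -> #|V| = 3) -> ntiles s a = 12.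
Proof.
move=> deg3V; have euler := euler_sphere T; have darts_F := card_darts_tiles.
have darts_E := card_darts_edges; have darts_V := card_porbits_sum s.
rewrite (eq_bigr (fun _ => 3)) // sum_nat_const in darts_V.
rewrite /ntiles in darts_F *; rewrite darts_F in darts_E darts_V.
move: euler darts_E darts_V.
by move: #|vertices s a| #|tiles s a| #|edges s a| => nV nF nE; lia.
Qed.

Lemma deg3_corners V : deg3 s a V -> exists x1 x2 x3,
  [/\ x1 \in V, x2 \in V, x3 \in V, angles ang V = [:: ang x1; ang x2; ang x3]
    & (ang x1 + ang x2 + ang x3 = 2 * PI)%Re].
Proof.
case/andP => VV /eqP V3; have := vertex_angle_sum T VV.
rewrite -big_filter deprecated_filter_index_enum /angles.
have inV x : x \in enum V -> x \in V by rewrite mem_enum.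
rewrite cardE in V3; move: inV V3; case: (enum V) => [|x1 [|x2 [|x3 [|? ?]]]] //= inV _.
rewrite !big_cons big_nil => sum3; exists x1, x2, x3.
by split; rewrite ?inV ?inE ?eqxx ?orbT //; lra.
Qed.

Lemma deg3_exists : exists V, deg3 s a V.
Proof.
apply: NNPP => none; have := deg3_count_lower_bound.
rewrite /deg3_count big1 ?addnS // => V VV.
by case: eqP => // V3; case: none; exists V; rewrite /deg3 VV V3.
Qed.

Lemma angles_In (X : {set D}) v :
  List.In v (angles ang X) -> exists2 x, x \in X & v = ang x.
Proof.
rewrite /angles; have : {subset enum X <= X} by move=> x; rewrite mem_enum.
elim: (enum X) => //= x l IH sub [<-|vl]; first by exists x; rewrite ?sub ?inE ?eqxx.
by apply: IH => // y yl; apply: sub; rewrite inE yl orbT.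
Qed.

Lemma In_angles (X : {set D}) x : x \in X -> List.In (ang x) (angles ang X).
Proof.
rewrite /angles -mem_enum; elim: (enum X) => //= y l IH.
by rewrite inE => /orP[/eqP ->|/IH]; [left | right].
Qed.

Variable P : list R.
Hypothesis HP : tile_angles s a ang P.

Lemma angle_in_tile x : List.In (ang x) P.
Proof.
have /HP permF : porbit (face_perm s a) x \in tiles s a by apply: imset_f.
by apply: Permutation_in (Permutation_sym permF) _; apply: In_angles; apply: porbit_id.
Qed.

Lemma size_tile : size P = 5.
Proof.
have [V /deg3_corners[x [_ [_ _]]]] := deg3_exists.
have Fx : porbit (face_perm s a) x \in tiles s a by apply: imset_f.
by rewrite (Permutation_size (HP Fx)) size_map -cardE (tiles_pentagons T Fx).
Qed.

(* The counting argument behind the whole classification: if every degree 3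
   vertex has weight at least [K > 0], the pentagon has weight above [K],
   since [K * (f + 8) <= K * v3 <= f * (weight of the pentagon)]. *)
Lemma weight_bound (w : R -> nat) K : 0 < K ->
  (forall V, deg3 s a V -> K <= wsum w (angles ang V)) -> K < wsum w P.
Proof.
move=> K0 deg3K.
have total_tiles : \sum_(x : D) w (ang x) = ntiles s a * wsum w P.
  rewrite (sum_porbits (face_perm s a)) /ntiles -sum_nat_const.
  by apply: eq_bigr => F HF; rewrite sum_angles (wsum_perm _ (HP HF)).
have total_vertices : K * deg3_count <= \sum_(x : D) w (ang x).
  rewrite (sum_porbits s) /deg3_count big_distrr; apply: leq_sum => V VV /=.
  case: eqP => [V3|_]; last by rewrite muln0.
  by rewrite muln1 sum_angles; apply: deg3K; rewrite /deg3 VV V3.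
have := leq_mul (leqnn K) deg3_count_lower_bound.
rewrite total_tiles in total_vertices; move: total_vertices.
move: (ntiles s a) (wsum w P) deg3_count => nF W n3; nia.
Qed.

(* A pentagon with all angles [2 pi / 3] only tiles as the dodecahedron. *)
Lemma tile_not_all_two_thirds : 12 < ntiles s a ->
  ~ (forall y, List.In y P -> y = (2 * PI / 3)%Re).
Proof.
move=> f_gt12 all23; suff: ntiles s a = 12 by move=> f12; rewrite f12 in f_gt12.
apply: ntiles_all_deg3 => V VV; have := vertex_angle_sum T VV.
rewrite (eq_bigr (fun=> 2 * PI / 3)%Re) => [|x _]; last exact/all23/angle_in_tile.
rewrite big_const iter_Rplus => sumV; have pi_pos := PI_RGT_0.
apply: INR_eq; apply: (Rmult_eq_reg_r (2 * PI / 3)) => /=; lra.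
Qed.

Lemma tile_of L : Permutation L P -> tile_angles s a ang L.
Proof. by move=> LP F /HP; apply: Permutation_trans. Qed.

Definition vtype (t : list R) : Prop :=
  exists V, deg3 s a V /\ Permutation t (angles ang V).

Lemma vtype_perm t t' : Permutation t t' -> vtype t -> vtype t'.
Proof.
move=> tt' [V [dV tV]]; exists V; split => //.
exact: Permutation_trans (Permutation_sym tt') tV.
Qed.

Lemma vtype_deg3 V : deg3 s a V -> exists x y z,
  angles ang V = [:: x; y; z] /\ vtype [:: x; y; z].
Proof.
move=> dV; have [x1 [x2 [x3 [_ _ _ AV _]]]] := deg3_corners dV.
by exists (ang x1), (ang x2), (ang x3); split => //; exists V; rewrite AV.
Qed.

Lemma vtype_exists : exists x y z, vtype [:: x; y; z].
Proof. by have [V /vtype_deg3[x [y [z [_ ?]]]]] := deg3_exists; exists x, y, z. Qed.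

Lemma vtype_sum x y z : vtype [:: x; y; z] -> (x + y + z = 2 * PI)%Re.
Proof.
case=> V [dV p]; have [x1 [x2 [x3 [_ _ _ AV sum3]]]] := deg3_corners dV.
rewrite AV in p; have := Rsum_perm p; rewrite /=; lra.
Qed.

Lemma vtype_in_tile t v : vtype t -> List.In v t -> List.In v P.
Proof.
by move=> [V [_ tV]] /(Permutation_in _ tV) /angles_In [x _ ->]; apply: angle_in_tile.
Qed.

Definition covers (S : list (list R)) : Prop :=
  forall x y z, vtype [:: x; y; z] -> exists2 t, List.In t S & Permutation t [:: x; y; z].

Lemma covers_from (opts S : list (list R)) :
  (forall x y z, vtype [:: x; y; z] ->
     exists2 t, List.In t opts & Permutation t [:: x; y; z]) ->
  (forall t, List.In t opts -> vtype t -> exists2 t', List.In t' S & Permutation t' t) ->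
  covers S.
Proof.
move=> cand present x y z vxyz; have [t topts txyz] := cand _ _ _ vxyz.
have [t' t'S t't] := present t topts (vtype_perm (Permutation_sym txyz) vxyz).
by exists t' => //; apply: Permutation_trans t't txyz.
Qed.

Ltac settle_candidate vt :=
  first [ perm_member | contradiction
        | exfalso; have := vtype_sum vt;
          match goal with H : ?x <> ?y |- _ => move=> ?; apply: H; lra end ].

Lemma types_of S : covers S -> (forall t, List.In t S -> vtype t) ->
  deg3_vertex_types s a ang S.
Proof.
move=> cov present; split => [V /vtype_deg3[x [y [z [-> vxyz]]]]|c cS].
  by have [t tS txyz] := cov _ _ _ vxyz; exists t.
by have [V ?] := present c cS; exists V.
Qed.

Lemma weight_bound_covers S (w : R -> nat) K : covers S -> 0 < K ->
  (forall t, List.In t S -> K <= wsum w t) -> K < wsum w P.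
Proof.
move=> cov K0 SK; apply: weight_bound => // V /vtype_deg3[x [y [z [-> vxyz]]]].
by have [t tS txyz] := cov _ _ _ vxyz; rewrite -(wsum_perm _ txyz); apply: SK.
Qed.

Hypothesis f_gt12 : 12 < ntiles s a.

Lemma case_cube al : vtype [:: al; al; al] -> covers [:: [:: al; al; al]] ->
  pentagon_classification s a ang.
Proof.
move=> v3 cov.
have c4 : 3 < cnt P al by apply: (weight_bound_covers cov) => // t [<-|[]]; eval_weights.
have c5 : cnt P al <= 5 by rewrite -size_tile; apply: wsum_le_size; apply: ind_le1.
have not5 : cnt P al <> 5.
  move=> c5'; apply: (tile_not_all_two_thirds f_gt12) => y yP.
  rewrite (@cnt_eq_size al P y) ?size_tile //; have := vtype_sum v3; lra.
have [be [uab Pt]] := @five_shape_one al P size_tile ltac:(lia).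
exists al, be, al, al; left; split => //; split; last exact: tile_of.
by apply: types_of => // t [<-|[]].
Qed.

Lemma case_single_double al be : al <> be -> vtype [:: al; be; be] ->
  covers [:: [:: al; be; be]] -> pentagon_classification s a ang.
Proof.
move=> ab vabb cov.
have ca : 1 < cnt P al by apply: (weight_bound_covers cov) => // t [<-|[]]; eval_weights.
have cb : 2 < cnt P be by apply: (weight_bound_covers cov) => // t [<-|[]]; eval_weights.
exists al, be, al, al; right; left; split; first by solve_nodup.
split; first by apply: types_of => // t [<-|[]].
by left; apply/tile_of/five_shape_two; rewrite ?size_tile.
Qed.

Lemma case_distinct_cube al be ga : al <> be -> al <> ga -> be <> ga ->
  vtype [:: al; be; ga] -> vtype [:: al; al; al] ->
  covers [:: [:: al; be; ga]; [:: al; al; al]] -> pentagon_classification s a ang.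
Proof.
move=> ab ag bg vabg vaaa cov.
have ca : 1 < cnt P al.
  by apply: (weight_bound_covers cov) => // t [<-|[<-|[]]]; eval_weights.
have c4 : 3 < cnt P al + cnt P be + cnt P ga.
  rewrite /cnt -!wsum_add; apply: (weight_bound_covers cov) => // t [<-|[<-|[]]]; eval_weights.
have cb : 0 < cnt P be by apply/cnt_In/(vtype_in_tile vabg); right; left.
have cg : 0 < cnt P ga by apply/cnt_In/(vtype_in_tile vabg); right; right; left.
have types_abg : deg3_vertex_types s a ang [:: [:: al; be; ga]; [:: al; al; al]].
  by apply: types_of => // t [<-|[<-|[]]].
have types_agb : deg3_vertex_types s a ang [:: [:: al; ga; be]; [:: al; al; al]].
  apply: types_of => [|t [<-|[<-|[]]]] //; last by apply: (vtype_perm _ vabg); solve_perm3.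
  by apply: (covers_from cov) => t [<-|[<-|[]]] _; perm_member.
have uabg : NoDup [:: al; be; ga] by solve_nodup.
case: (five_shape_double uabg size_tile ca cb cg c4) => [Pt|[Pt|[Pt|[de [uabgd Pt]]]]].
- exists al, be, ga, al; do 2 right; left; do 2 (split => //).
  by left; apply: tile_of.
- exists al, be, ga, al; do 2 right; left; do 2 (split => //).
  by right; left; apply: tile_of.
- (* [al^2 be ga^2] is the shape [al^2 be^2 ga] with [be] and [ga] exchanged. *)
  exists al, ga, be, al; do 2 right; left; split; first by solve_nodup.
  split => //; right; left; apply: tile_of; apply: (Permutation_trans _ Pt).
  by do 2 apply: perm_skip; solve_perm3.
- exists al, be, ga, de; do 2 right; left; do 2 (split => //).
  by do 2 right; split => //; apply: tile_of.
Qed.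

Lemma case_two_doubles al be ga : al <> be -> al <> ga -> be <> ga ->
  vtype [:: al; be; be] -> vtype [:: al; al; ga] ->
  covers [:: [:: al; be; be]; [:: al; al; ga]] -> pentagon_classification s a ang.
Proof.
move=> ab ag bg vabb vaag cov.
have ca : 1 < cnt P al.
  by apply: (weight_bound_covers cov) => // t [<-|[<-|[]]]; eval_weights.
have c4 : 3 < cnt P al + cnt P be + cnt P ga.
  rewrite /cnt -!wsum_add; apply: (weight_bound_covers cov) => // t [<-|[<-|[]]]; eval_weights.
have cb : 0 < cnt P be by apply/cnt_In/(vtype_in_tile vabb); right; left.
have cg : 0 < cnt P ga by apply/cnt_In/(vtype_in_tile vaag); right; right; left.
have uabg : NoDup [:: al; be; ga] by solve_nodup.
have types_S : deg3_vertex_types s a ang [:: [:: al; be; be]; [:: al; al; ga]].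
  by apply: types_of => // t [<-|[<-|[]]].
exists al, be, ga; case: (five_shape_double uabg size_tile ca cb cg c4) =>
  [Pt|[Pt|[Pt|[de [uabgd Pt]]]]]; [exists al | exists al | exists al | exists de];
  do 3 right; left; do 2 (split => //).
- by left; apply: tile_of.
- by right; left; apply: tile_of.
- by do 2 right; left; apply: tile_of.
- by do 3 right; split => //; apply: tile_of.
Qed.

Lemma case_double_cube al be ga : al <> be -> al <> ga -> be <> ga ->
  vtype [:: al; be; be] -> vtype [:: ga; ga; ga] ->
  covers [:: [:: al; be; be]; [:: ga; ga; ga]] -> pentagon_classification s a ang.
Proof.
move=> ab ag bg vabb vggg cov.
have c4 : 3 < cnt P al + cnt P be + cnt P ga.
  rewrite /cnt -!wsum_add; apply: (weight_bound_covers cov) => // t [<-|[<-|[]]]; eval_weights.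
have c7 : 6 < 3 * cnt P be + 2 * cnt P ga.
  rewrite /cnt -!wsum_scale -wsum_add.
  by apply: (weight_bound_covers cov) => // t [<-|[<-|[]]]; eval_weights.
have ca : 0 < cnt P al by apply/cnt_In/(vtype_in_tile vabb); left.
have cb : 0 < cnt P be by apply/cnt_In/(vtype_in_tile vabb); right; left.
have cg : 0 < cnt P ga by apply/cnt_In/(vtype_in_tile vggg); left.
have uabg : NoDup [:: al; be; ga] by solve_nodup.
have types_S : deg3_vertex_types s a ang [:: [:: al; be; be]; [:: ga; ga; ga]].
  by apply: types_of => // t [<-|[<-|[]]].
exists al, be, ga; case: (five_shape_single uabg size_tile ca cb cg c4 c7) =>
  [Pt|[Pt|[Pt|[Pt|[Pt|[de [uabgd [Pt|Pt]]]]]]]];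
  [exists al | exists al | exists al | exists al | exists al | exists de | exists de];
  do 4 right; do 2 (split => //).
- by left; apply: tile_of.
- by right; left; apply: tile_of.
- by do 2 right; left; apply: tile_of.
- by do 3 right; left; apply: tile_of.
- by do 4 right; left; apply: tile_of.
- by do 5 right; split => //; left; apply: tile_of.
- by do 5 right; split => //; right; apply: tile_of.
Qed.

(* A single type [al be ga] of distinct values is impossible: each value
   would occur twice in the pentagon. *)
Lemma no_lone_distinct al be ga : al <> be -> al <> ga -> be <> ga ->
  ~ covers [:: [:: al; be; ga]].
Proof.
move=> ab ag bg cov.
have ca : 1 < cnt P al by apply: (weight_bound_covers cov) => // t [<-|[]]; eval_weights.
have cb : 1 < cnt P be by apply: (weight_bound_covers cov) => // t [<-|[]]; eval_weights.
have cg : 1 < cnt P ga by apply: (weight_bound_covers cov) => // t [<-|[]]; eval_weights.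
have := @cnt3_le_size al be ga P ltac:(solve_nodup); rewrite size_tile; lia.
Qed.

Variable l : list R.
Hypothesis l_small : length l <= 3.
Hypothesis l_values : forall V x, deg3 s a V -> x \in V -> List.In (ang x) l.

Lemma vtype_in_values t v : vtype t -> List.In v t -> List.In v l.
Proof.
move=> [V [dV tV]] /(Permutation_in _ tV) /angles_In [x xV ->]; exact: l_values xV.
Qed.

Lemma classify_distinct al be ga : al <> be -> al <> ga -> be <> ga ->
  vtype [:: al; be; ga] -> pentagon_classification s a ang.
Proof.
move=> ab ag bg vabg; have sabg := vtype_sum vabg.
have in_l v : List.In v [:: al; be; ga] -> List.In v l by apply: vtype_in_values vabg.
have [Z lZ] := third_value l_small ab (in_l al ltac:(simpl; auto)) (in_l be ltac:(simpl; auto)).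
have Zga : Z = ga by case: (lZ ga (in_l ga ltac:(simpl; auto))) => [/ag []|[/bg []|[//|[]]]].
have vals v : List.In v l -> List.In v [:: al; be; ga] by rewrite -Zga; apply: lZ.
have partners x y z : vtype [:: x; y; z] -> exists2 t,
    List.In t [:: [:: al; be; ga]; [:: al; al; al]; [:: be; be; be]; [:: ga; ga; ga]]
    & Permutation t [:: x; y; z].
  move=> vxyz; apply: (partners_of_distinct ab ag bg sabg); last exact: vtype_sum vxyz;
    by apply: vals; apply: (vtype_in_values vxyz); rewrite /=; auto.
(* At most one cube occurs; it decides which value plays [al]. *)
case: (classic (vtype [:: al; al; al])) => [vaaa|naaa].
  have := vtype_sum vaaa => saaa; apply: (case_distinct_cube ab ag bg vabg vaaa).
  by apply: (covers_from partners) => t [<-|[<-|[<-|[<-|[]]]]] vt; settle_candidate vt.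
case: (classic (vtype [:: be; be; be])) => [vbbb|nbbb].
  have := vtype_sum vbbb => sbbb; apply: (@case_distinct_cube be ga al) => //; try congruence.
    by apply: (vtype_perm _ vabg); solve_perm3.
  by apply: (covers_from partners) => t [<-|[<-|[<-|[<-|[]]]]] vt; settle_candidate vt.
case: (classic (vtype [:: ga; ga; ga])) => [vggg|nggg].
  have := vtype_sum vggg => sggg; apply: (@case_distinct_cube ga al be) => //; try congruence.
    by apply: (vtype_perm _ vabg); solve_perm3.
  by apply: (covers_from partners) => t [<-|[<-|[<-|[<-|[]]]]] vt; settle_candidate vt.
case: (no_lone_distinct ab ag bg).
by apply: (covers_from partners) => t [<-|[<-|[<-|[<-|[]]]]] vt; settle_candidate vt.
Qed.

Lemma classify_double X Y : X <> Y -> vtype [:: X; X; Y] ->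
  (forall x y z, vtype [:: x; y; z] -> x = y \/ y = z \/ x = z) ->
  pentagon_classification s a ang.
Proof.
move=> XY vxxy rep; have sxxy := vtype_sum vxxy.
have in_l v : List.In v [:: X; X; Y] -> List.In v l by apply: vtype_in_values vxxy.
have [Z lZ] := third_value l_small XY (in_l X ltac:(simpl; auto)) (in_l Y ltac:(simpl; auto)).
have partners x y z : vtype [:: x; y; z] -> exists2 t,
    List.In t [:: [:: X; X; Y]; [:: Y; Y; Z]; [:: Z; Z; X]; [:: Z; Z; Z]]
    & Permutation t [:: x; y; z].
  move=> vxyz; apply: (partners_of_double XY sxxy); try exact: rep vxyz;
    last exact: vtype_sum vxyz;
    by apply: lZ; apply: (vtype_in_values vxyz); rewrite /=; auto.
have vyxx : vtype [:: Y; X; X] by apply: (vtype_perm _ vxxy); solve_perm3.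
(* Besides [X^2 Y], at most one of [Y^2 Z], [Z^2 X], [Z^3] occurs. *)
case: (classic (vtype [:: Y; Y; Z])) => [vyyz|nyyz].
  have syyz := vtype_sum vyyz.
  have ZX : Z <> X by move=> e; apply: XY; rewrite e in syyz; lra.
  have ZY : Z <> Y by move=> e; apply: XY; rewrite e in syyz; lra.
  apply: (@case_two_doubles Y X Z) => //; try congruence.
  by apply: (covers_from partners) => t [<-|[<-|[<-|[<-|[]]]]] vt; settle_candidate vt.
case: (classic (vtype [:: Z; Z; X])) => [vzzx|nzzx].
  have szzx := vtype_sum vzzx.
  have ZX : Z <> X by move=> e; apply: XY; rewrite e in szzx; lra.
  have ZY : Z <> Y by move=> e; apply: XY; rewrite e in szzx; lra.
  apply: (@case_two_doubles X Z Y) => //; try congruence.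
    by apply: (vtype_perm _ vzzx); solve_perm3.
  by apply: (covers_from partners) => t [<-|[<-|[<-|[<-|[]]]]] vt; settle_candidate vt.
case: (classic (vtype [:: Z; Z; Z])) => [vzzz|nzzz].
  have szzz := vtype_sum vzzz.
  have ZX : Z <> X by move=> e; apply: XY; rewrite e in szzz; lra.
  have ZY : Z <> Y by move=> e; apply: XY; rewrite e in szzz; lra.
  apply: (@case_double_cube Y X Z) => //; try congruence.
  by apply: (covers_from partners) => t [<-|[<-|[<-|[<-|[]]]]] vt; settle_candidate vt.
apply: (@case_single_double Y X) => //; try congruence.
by apply: (covers_from partners) => t [<-|[<-|[<-|[<-|[]]]]] vt; settle_candidate vt.
Qed.

Lemma classify_cubes : (forall x y z, vtype [:: x; y; z] -> y = x /\ z = x) ->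
  pentagon_classification s a ang.
Proof.
move=> cube; have [x [y [z vxyz]]] := vtype_exists.
have [eyx ezx] := cube _ _ _ vxyz; rewrite eyx ezx in vxyz; apply: (case_cube vxyz).
move=> x' y' z' vt; have [ey'x' ez'x'] := cube _ _ _ vt; rewrite ey'x' ez'x' in vt *.
have := vtype_sum vt; have := vtype_sum vxyz => ? ?.
have -> : x' = x by lra.
by exists [:: x; x; x]; [left|].
Qed.

Lemma classification : pentagon_classification s a ang.
Proof.
case: (classic (exists x y z, vtype [:: x; y; z] /\ x <> y /\ x <> z /\ y <> z)).
  by case=> x [y [z [vxyz [xy [xz yz]]]]]; apply: (classify_distinct xy xz yz vxyz).
move=> no_distinct.
have rep x y z : vtype [:: x; y; z] -> x = y \/ y = z \/ x = z.
  move=> vxyz; apply: NNPP => norep; apply: no_distinct; exists x, y, z.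
  by split => //; split; [|split] => e; apply: norep; auto.
case: (classic (exists x y z, vtype [:: x; y; z] /\ ~ (y = x /\ z = x))); last first.
  move=> no_double; apply: classify_cubes => x y z vxyz.
  by apply: NNPP => nc; apply: no_double; exists x, y, z.
case=> x [y [z [vxyz ncube]]]; case: (rep _ _ _ vxyz) => [xy|[yz|xz]].
- apply: (@classify_double x z) => //; first by move=> xz; apply: ncube; split; congruence.
  by rewrite -xy in vxyz.
- apply: (@classify_double y x) => //; first by move=> yx; apply: ncube; split; congruence.
  by apply: (vtype_perm _ vxyz); rewrite yz; solve_perm3.
- apply: (@classify_double x y) => //; first by move=> xy; apply: ncube; split; congruence.
  by apply: (vtype_perm _ vxyz); rewrite xz; solve_perm3.
Qed.

End Tiling.

Unset Implicit Arguments.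

Theorem proposition5 (D : finType) (s a : {perm D}) (ang : D -> R)
  (T : angle_congruent_pentagonal_tiling s a ang)
  (Hf : 12 < ntiles s a)
  (H3 : exists l : list R, length l <= 3 /\
          forall V x, deg3 s a V -> x \in V -> List.In (ang x) l) :
  exists al be ga de : R,
    (* S = {al^3} *)
    (NoDup [:: al; be] /\ deg3_vertex_types s a ang [:: [:: al; al; al]] /\
       tile_angles s a ang [:: al; al; al; al; be])
    \/
    (* S = {al be^2} *)
    (NoDup [:: al; be] /\ deg3_vertex_types s a ang [:: [:: al; be; be]] /\
       (tile_angles s a ang [:: al; al; be; be; be] \/
        tile_angles s a ang [:: al; al; al; be; be] \/
        (NoDup [:: al; be; ga] /\ tile_angles s a ang [:: al; al; be; be; ga])))
    \/
    (* S = {al be ga, al^3} *)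
    (NoDup [:: al; be; ga] /\
       deg3_vertex_types s a ang [:: [:: al; be; ga]; [:: al; al; al]] /\
       (tile_angles s a ang [:: al; al; al; be; ga] \/
        tile_angles s a ang [:: al; al; be; be; ga] \/
        (NoDup [:: al; be; ga; de] /\ tile_angles s a ang [:: al; al; be; ga; de])))
    \/
    (* S = {al be^2, al^2 ga} *)
    (NoDup [:: al; be; ga] /\
       deg3_vertex_types s a ang [:: [:: al; be; be]; [:: al; al; ga]] /\
       (tile_angles s a ang [:: al; al; al; be; ga] \/
        tile_angles s a ang [:: al; al; be; be; ga] \/
        tile_angles s a ang [:: al; al; be; ga; ga] \/
        (NoDup [:: al; be; ga; de] /\ tile_angles s a ang [:: al; al; be; ga; de])))
    \/
    (* S = {al be^2, ga^3} *)
    (NoDup [:: al; be; ga] /\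
       deg3_vertex_types s a ang [:: [:: al; be; be]; [:: ga; ga; ga]] /\
       (tile_angles s a ang [:: al; al; be; be; ga] \/
        tile_angles s a ang [:: al; al; be; ga; ga] \/
        tile_angles s a ang [:: al; be; be; be; ga] \/
        tile_angles s a ang [:: al; be; be; ga; ga] \/
        tile_angles s a ang [:: al; be; ga; ga; ga] \/
        (NoDup [:: al; be; ga; de] /\
           (tile_angles s a ang [:: al; be; be; ga; de] \/
            tile_angles s a ang [:: al; be; ga; ga; de])))).
Proof.
have [P HP] := angle_congruent T.
have [l [l_small l_values]] := H3.
exact: (classification T HP Hf l_small l_values).
Qed.
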